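(* Assume conditions (C1)–(C5). If $\zeta,\tilde\zeta\in\Theta$ satisfy $\limsup_{k\to\infty}\|\zeta_k-\tilde\zeta_k\|>0$, then there exist numbers $\epsilon_0>0$, $\epsilon_1>0$ and infinitely many pairwise disjoint intervals $J_q\subset\mathbb T_0$, $q\in\mathbb N$, each of length at least $\epsilon_1$, such that $\|\varphi_\zeta(t)-\varphi_{\tilde\zeta}(t)\|>\epsilon_0$ for all $t\in\bigcup_qJ_q$ (i.e. the pair $\varphi_\zeta,\varphi_{\tilde\zeta}$ is frequently $(\epsilon_0,\epsilon_1)$-separated).
   Context: Fix integers $m,n\ge1$ and $r\ge0$. Cells are indexed by pairs $(i,j)$, $1\le i\le m$, $1\le j\le n$. The $r$-neighbourhood of $(i,j)$ is $N_r(i,j)=\{(h,l):1\le h\le m,\ 1\le l\le n,\ \max(|h-i|,|l-j|)\le r\}$. Fix constants $a_{ij}>0$, $C^{hl}_{ij}\ge0$, and a continuous function $f:\mathbb R\to\mathbb R$. Vectors of $\mathbb R^{mn}$ are written $v=\{v_{ij}\}$, with norm $\|v\|=\max_{(i,j)}|v_{ij}|$. Time scale: $\{\theta_k\}_{k\in\mathbb Z}$ is strictly increasing, $\theta_{-1}<0<\theta_0$, and there exist $\omega>0$ and $p\in\mathbb N$ with $\theta_{k+2p}=\theta_k+\omega$ for all $k$. Set $\mathbb T_0=\bigcup_{k\in\mathbb Z}[\theta_{2k-1},\theta_{2k}]$, $\delta_k=\theta_{2k+1}-\theta_{2k}$, $\eta_k=\theta_{2k}-\theta_{2k-1}$ (both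 $p$-periodic in $k$), $\delta=\max_{1\le k\le p}\delta_k$. On $\mathbb T_0'=\mathbb T_0\setminus\{\theta_{2k-1}:k\in\mathbb Z\}$ define $\psi(t)=t-\sum_{0<\theta_{2k}<t}\delta_k$ for $t\ge0$ and $\psi(t)=t+\sum_{t\le\theta_{2k}<0}\delta_k$ for $t<0$; put $s_k=\psi(\theta_{2k})$, so $s_k-s_{k-1}=\eta_k$, and write $\psi(\omega):=\omega-\sum_{k=1}^p\delta_k=\sum_{k=1}^p\eta_k$. Inputs: $\Lambda\subset\mathbb R^{mn}$ is compact and $F:\Lambda\to\Lambda$ is continuous. $\Theta$ is the set of all sequences $\zeta=\{\zeta_k\}_{k\in\mathbb Z}$, $\zeta_k=\{\zeta^{ij}_k\}\in\Lambda$, with $\zeta_{k+1}=F(\zeta_k)$ for all $k\in\mathbb Z$. For $\zeta\in\Theta$, $L_{ij}(t,\zeta)=\zeta^{ij}_k$ for $t\in[\theta_{2k-1},\theta_{2k}]$. Network $(N_\zeta)$ on $\mathbb T_0$: $x^\Delta_{ij}(t)=-a_{ij}x_{ij}(t)-\sum_{(h,l)\in N_r(i,j)}C^{hl}_{ij}f(x_{hl}(t))x_{ij}(t)+L_{ij}(t,\zeta)$, $t\in\mathbb T_0$, where the $\Delta$-derivative at $\theta_{2k}$ is $(x(\theta_{2k+1})-x(\theta_{2k}))/\delta_k$ and elsewhere the ordinary derivative. Concretely, a solution on $\mathbb T_0$ is a function continuous and (one-sidedly at endpoints) differentiable on each $[\theta_{2k-1},\theta_{2k}]$ satisfying there $x_{ij}'=-a_{ij}x_{ij}-\sum_{(h,l)\in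 N_r(i,j)}C^{hl}_{ij}f(x_{hl})x_{ij}+\zeta^{ij}_k$, together with $x_{ij}(\theta_{2k+1})=(1-\delta_ka_{ij})x_{ij}(\theta_{2k})-\delta_k\sum_{(h,l)\in N_r(i,j)}C^{hl}_{ij}f(x_{hl}(\theta_{2k}))x_{ij}(\theta_{2k})+\delta_k\zeta^{ij}_k$. Impulsive system $(I_\zeta)$: for $s\in(s_{k-1},s_k)$, $y_{ij}'(s)=-a_{ij}y_{ij}(s)-\sum_{(h,l)\in N_r(i,j)}C^{hl}_{ij}f(y_{hl}(s))y_{ij}(s)+\zeta^{ij}_k$, and at $s=s_k$, $y_{ij}(s_k+)-y_{ij}(s_k)=-\delta_ka_{ij}y_{ij}(s_k)-\delta_k\sum_{(h,l)\in N_r(i,j)}C^{hl}_{ij}f(y_{hl}(s_k))y_{ij}(s_k)+\delta_k\zeta^{ij}_k$. Solutions are left-continuous, continuous except for discontinuities of the first kind at the $s_k$. Let $u_{ij}(s,\tau)=e^{-a_{ij}(s-\tau)}\prod_{\nu=l}^{k}(1-\delta_\nu a_{ij})$ if $s_{l-1}<\tau\le s_l$, $s_k<s\le s_{k+1}$, $k\ge l$, and $u_{ij}(s,\tau)=e^{-a_{ij}(s-\tau)}$ if $s_k<\tau\le s\le s_{k+1}$. Let $\lambda_{ij}=a_{ij}-\frac1{\psi(\omega)}\sum_{\nu=0}^{p-1}\ln|1-\delta_\nu a_{ij}|$, $\lambda=\min_{(i,j)}\lambda_{ij}$. Conditions: (C1) $\delta_ka_{ij}\ne1$ for all $i,j,k$;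 (C2) $\lambda>0$; (C3) $\sup_{s\in\mathbb R}|f(s)|\le M_f$ for some $M_f>0$; (C4) $|f(s_1)-f(s_2)|\le L_f|s_1-s_2|$ for all $s_1,s_2$, for some $L_f>0$. Under (C1),(C2) fix positive numbers $K_{ij}$ with $|u_{ij}(s,\tau)|\le K_{ij}e^{-\lambda_{ij}(s-\tau)}$ for $s\ge\tau$. Define $\bar c=\max_{(i,j)}\big(\frac{K_{ij}}{\lambda_{ij}}+\frac{p\delta K_{ij}}{1-e^{-\lambda_{ij}\psi(\omega)}}\big)\sum_{(h,l)\in N_r(i,j)}C^{hl}_{ij}$, $M_F=\max_{\eta\in\Lambda}\|F(\eta)\|$, $H_0=\frac{M_F}{1-M_f\bar c}\max_{(i,j)}\big(\frac{K_{ij}}{\lambda_{ij}}+\frac{p\delta K_{ij}}{1-e^{-\lambda_{ij}\psi(\omega)}}\big)$. (C5) $(M_f+H_0L_f)\bar c<1$. Under (C1)–(C5), for $\zeta\in\Theta$ the system $(I_\zeta)$ has a unique solution $\phi_\zeta$ on $\mathbb R$ with $\sup_s\|\phi_\zeta(s)\|\le H_0$; define $\varphi_\zeta:\mathbb T_0\to\mathbb R^{mn}$ by $\varphi_\zeta(t)=\phi_\zeta(\psi(t))$ for $t\in\mathbb T_0'$ and $\varphi_\zeta(\theta_{2k+1})=\phi_\zeta(s_k+)$. Then $\varphi_\zeta$ is the unique solution of $(N_\zeta)$ on $\mathbb T_0$ with $\sup_{t\in\mathbb T_0}\|\varphi_\zeta(t)\|\le H_0$. *)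

From Stdlib Require Import Reals Lra Lia ZArith List.
Import ListNotations.
Open Scope R_scope.

(** Vectors of R^{mn}: functions on index pairs (i,j); only cells
    1<=i<=m, 1<=j<=n matter.  Elements of Lambda are required to vanish
    off the cells, so that Lambda is literally a subset of R^{mn}. *)
Definition vec := nat -> nat -> R.

Definition is_cell (m n i j : nat) : Prop := (1 <= i <= m)%nat /\ (1 <= j <= n)%nat.

Definition supported (m n : nat) (v : vec) : Prop :=
  forall i j, ~ is_cell m n i j -> v i j = 0.

Definition cells (m n : nat) : list (nat * nat) := list_prod (seq 1 m) (seq 1 n).

Definition max_cells (m n : nat) (g : nat -> nat -> R) : R :=
  fold_right Rmax 0 (map (fun c => g (fst c) (snd c)) (cells m n)).

Definition vnorm (m n : nat) (v : vec) : R := max_cells m n (fun i j => Rabs (v i j)).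

Definition vsub (v w : vec) : vec := fun i j => v i j - w i j.

Definition in_nbhd (r i j h l : nat) : bool :=
  Nat.leb (Nat.max (Nat.max (h - i) (i - h)) (Nat.max (l - j) (j - l))) r.

Definition nb_sum (m n r i j : nat) (g : nat -> nat -> R) : R :=
  fold_right Rplus 0
    (map (fun c => if in_nbhd r i j (fst c) (snd c) then g (fst c) (snd c) else 0)
         (cells m n)).

Definition zsum (a : Z) (len : nat) (g : Z -> R) : R :=
  fold_right Rplus 0 (map (fun i => g (a + Z.of_nat i)%Z) (seq 0 len)).
Definition zprod (a : Z) (len : nat) (g : Z -> R) : R :=
  fold_right Rmult 1 (map (fun i => g (a + Z.of_nat i)%Z) (seq 0 len)).

Definition time_scale (theta : Z -> R) (omega : R) (p : nat) : Prop :=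
  (forall k1 k2 : Z, (k1 < k2)%Z -> theta k1 < theta k2) /\
  theta (-1)%Z < 0 < theta 0%Z /\
  0 < omega /\
  (forall k : Z, theta (k + 2 * Z.of_nat p)%Z = theta k + omega).

Definition dlt (theta : Z -> R) (k : Z) : R := theta (2 * k + 1)%Z - theta (2 * k)%Z.
Definition eta (theta : Z -> R) (k : Z) : R := theta (2 * k)%Z - theta (2 * k - 1)%Z.

Definition dmax (theta : Z -> R) (p : nat) : R :=
  fold_right Rmax 0 (map (fun k => dlt theta (Z.of_nat k)) (seq 1 p)).

Definition psi_omega (theta : Z -> R) (p : nat) : R := zsum 1 p (eta theta).

Definition inT0 (theta : Z -> R) (t : R) : Prop :=
  exists k : Z, theta (2 * k - 1)%Z <= t <= theta (2 * k)%Z.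

(** s_k = psi(theta_{2k}):  for k>=0 the theta_{2j} in (0, theta_{2k}) are
    j = 0..k-1; for k<0 the theta_{2j} in [theta_{2k},0) are j = k..-1. *)
Definition s_ (theta : Z -> R) (k : Z) : R :=
  if Z.leb 0 k then theta (2 * k)%Z - zsum 0 (Z.to_nat k) (dlt theta)
  else theta (2 * k)%Z + zsum k (Z.to_nat (- k)) (dlt theta).

Definition lam_of (theta : Z -> R) (p : nat) (aij : R) : R :=
  aij - / psi_omega theta p * zsum 0 p (fun nu => ln (Rabs (1 - dlt theta nu * aij))).

(** |u_ij(s,tau)| <= K e^{-lambda (s - tau)} for all s >= tau, written out
    according to the two cases of the definition of u_ij. *)
Definition u_bound (theta : Z -> R) (aij K lam : R) : Prop :=
  (forall (k l : Z) (s tau : R), (l <= k)%Z ->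
     s_ theta (l - 1) < tau <= s_ theta l ->
     s_ theta k < s <= s_ theta (k + 1) ->
     Rabs (exp (- aij * (s - tau)) *
           zprod l (Z.to_nat (k - l + 1)) (fun nu => 1 - dlt theta nu * aij))
       <= K * exp (- lam * (s - tau))) /\
  (forall (k : Z) (s tau : R),
     s_ theta k < tau -> tau <= s -> s <= s_ theta (k + 1) ->
     Rabs (exp (- aij * (s - tau))) <= K * exp (- lam * (s - tau))).

Definition compact_set (m n : nat) (L : vec -> Prop) : Prop :=
  forall u : nat -> vec, (forall k, L (u k)) ->
  exists (phi : nat -> nat) (v : vec),
    (forall k, (phi k < phi (S k))%nat) /\ L v /\
    forall eps, 0 < eps -> exists N, forall k, (N <= k)%nat ->
      vnorm m n (vsub (u (phi k)) v) < eps.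

Definition continuous_on_set (m n : nat) (L : vec -> Prop) (F : vec -> vec) : Prop :=
  forall v, L v -> forall eps, 0 < eps -> exists d, 0 < d /\
    forall w, L w -> vnorm m n (vsub w v) < d -> vnorm m n (vsub (F w) (F v)) < eps.

Definition in_Theta (L : vec -> Prop) (F : vec -> vec) (zeta : Z -> vec) : Prop :=
  forall k : Z, L (zeta k) /\ zeta (k + 1)%Z = F (zeta k).

Definition deriv_within (a b : R) (g : R -> R) (t l : R) : Prop :=
  forall eps, 0 < eps -> exists d, 0 < d /\
    forall h, h <> 0 -> Rabs h < d -> a <= t + h <= b ->
      Rabs ((g (t + h) - g t) / h - l) < eps.

Definition solves_N (m n r : nat) (a : nat -> nat -> R) (C : nat -> nat -> nat -> nat -> R)
  (f : R -> R) (theta : Z -> R) (zeta : Z -> vec) (x : R -> vec) : Prop :=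
  forall (k : Z) (i j : nat), is_cell m n i j ->
    (forall t, theta (2 * k - 1)%Z <= t <= theta (2 * k)%Z ->
       deriv_within (theta (2 * k - 1)%Z) (theta (2 * k)%Z) (fun s => x s i j) t
         (- a i j * x t i j
          - nb_sum m n r i j (fun h l => C i j h l * f (x t h l) * x t i j)
          + zeta k i j)) /\
    x (theta (2 * k + 1)%Z) i j =
      (1 - dlt theta k * a i j) * x (theta (2 * k)%Z) i j
      - dlt theta k * nb_sum m n r i j
          (fun h l => C i j h l * f (x (theta (2 * k)%Z) h l) * x (theta (2 * k)%Z) i j)
      + dlt theta k * zeta k i j.

Definition kfac (theta : Z -> R) (p : nat) (a K : nat -> nat -> R) (i j : nat) : R :=
  let lam := lam_of theta p (a i j) in
  K i j / lam + INR p * dmax theta p * K i j / (1 - exp (- lam * psi_omega theta p)).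

Definition cbar (m n r : nat) (theta : Z -> R) (p : nat) (a K : nat -> nat -> R)
  (C : nat -> nat -> nat -> nat -> R) : R :=
  max_cells m n (fun i j => kfac theta p a K i j * nb_sum m n r i j (fun h l => C i j h l)).

Definition H0 (m n r : nat) (theta : Z -> R) (p : nat) (a K : nat -> nat -> R)
  (C : nat -> nat -> nat -> nat -> R) (Mf MF : R) : R :=
  MF / (1 - Mf * cbar m n r theta p a K C) * max_cells m n (kfac theta p a K).

From Stdlib Require Import Reals ZArith List Lra Lia Classical ClassicalEpsilon.
From Coquelicot Require Import Coquelicot.
Open Scope R_scope.

(* On a window [theta_(2k-1), theta_(2k)] where |zeta_k - zeta~_k| > e, the
   difference x - x' of the two solutions has a derivative bounded in terms of the
   a priori bounds, so it is Lipschitz.  If it exceeds 2 eps0 somewhere in the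
   window, it stays above eps0 on a subinterval of length at least eps1.  Otherwise
   the Lipschitz continuity of f makes the two right-hand sides differ from
   zeta_k - zeta~_k by O(eps0), so one coordinate of x - x' drifts at rate at least
   e/2 across a window of length at least min_k eta_k > 0, which is impossible
   within a band of width 4 eps0.  Infinitely many such windows give the disjoint
   intervals.  Only the bounds |x|, |x'| <= H0, |zeta_k| <= M_F and (C3), (C4) are
   used; (C1), (C2), (C5) serve only to construct the solutions. *)

Lemma fold_Rmax_nonneg l : 0 <= fold_right Rmax 0 l.
Proof. induction l; simpl; [lra|]. eapply Rle_trans; [exact IHl | apply Rmax_r]. Qed.

Lemma fold_Rmax_ge l x : In x l -> x <= fold_right Rmax 0 l.
Proof.
  induction l as [|y l IH]; simpl; intros Hx; [contradiction|].
  destruct Hx as [<- | Hx]; [apply Rmax_l|].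
  eapply Rle_trans; [apply IH, Hx | apply Rmax_r].
Qed.

Lemma fold_Rmax_le l c : 0 <= c -> (forall x, In x l -> x <= c) -> fold_right Rmax 0 l <= c.
Proof. induction l; simpl; intros Hc Hl; [lra|]. apply Rmax_lub; auto. Qed.

Lemma fold_Rmax_gt l c : 0 <= c -> c < fold_right Rmax 0 l -> exists x, In x l /\ c < x.
Proof.
  induction l as [|y l IH]; simpl; intros Hc Hlt; [lra|].
  destruct (Rle_dec y (fold_right Rmax 0 l)) as [Hle | Hgt].
  - rewrite Rmax_right in Hlt by exact Hle.
    destruct (IH Hc Hlt) as [x [Hx Hcx]]. exists x; auto.
  - rewrite Rmax_left in Hlt by lra. exists y; auto.
Qed.

Lemma in_cells m n i j : In (i, j) (cells m n) <-> is_cell m n i j.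
Proof. unfold cells, is_cell. rewrite in_prod_iff, !in_seq. lia. Qed.

Lemma max_cells_ge m n g i j : is_cell m n i j -> g i j <= max_cells m n g.
Proof.
  intros Hc. apply fold_Rmax_ge, in_map_iff. exists (i, j). split; [reflexivity | now apply in_cells].
Qed.

Lemma max_cells_le m n g c :
  0 <= c -> (forall i j, is_cell m n i j -> g i j <= c) -> max_cells m n g <= c.
Proof.
  intros Hc Hg. apply fold_Rmax_le; [exact Hc|]. intros y Hy.
  apply in_map_iff in Hy as [[i j] [<- Hin]]. apply Hg, in_cells, Hin.
Qed.

Lemma max_cells_nonneg m n g : 0 <= max_cells m n g.
Proof. apply fold_Rmax_nonneg. Qed.

Lemma vnorm_nonneg m n v : 0 <= vnorm m n v.
Proof. apply max_cells_nonneg. Qed.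

Lemma vnorm_ge m n v i j : is_cell m n i j -> Rabs (v i j) <= vnorm m n v.
Proof. apply (max_cells_ge m n (fun i j => Rabs (v i j))). Qed.

Lemma vnorm_gt m n v c :
  0 <= c -> c < vnorm m n v -> exists i j, is_cell m n i j /\ c < Rabs (v i j).
Proof.
  intros Hc Hlt. destruct (fold_Rmax_gt _ _ Hc Hlt) as [y [Hy Hcy]].
  apply in_map_iff in Hy as [[i j] [<- Hin]].
  exists i, j. split; [now apply in_cells | exact Hcy].
Qed.

Lemma vnorm_sub_le m n v w : vnorm m n (vsub v w) <= vnorm m n v + vnorm m n w.
Proof.
  apply max_cells_le.
  - pose proof (vnorm_nonneg m n v); pose proof (vnorm_nonneg m n w); lra.
  - intros i j Hc. unfold vsub, Rminus. eapply Rle_trans; [apply Rabs_triang|].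
    rewrite Rabs_Ropp. pose proof (vnorm_ge m n v i j Hc); pose proof (vnorm_ge m n w i j Hc); lra.
Qed.

Lemma nb_sum_sub m n r i j G1 G2 :
  nb_sum m n r i j G1 - nb_sum m n r i j G2 = nb_sum m n r i j (fun h l => G1 h l - G2 h l).
Proof.
  unfold nb_sum. induction (cells m n) as [|c cs IH]; simpl; [ring|].
  rewrite <- IH. destruct (in_nbhd r i j (fst c) (snd c)); ring.
Qed.

Lemma nb_sum_abs_le m n r i j G W w :
  (forall h l, is_cell m n h l -> Rabs (G h l) <= W h l * w) ->
  Rabs (nb_sum m n r i j G) <= nb_sum m n r i j W * w.
Proof.
  intros HG. unfold nb_sum.
  assert (Hcs : forall c, In c (cells m n) -> Rabs (G (fst c) (snd c)) <= W (fst c) (snd c) * w)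
    by (intros [h l] Hin; apply HG, in_cells, Hin).
  induction (cells m n) as [|c cs IH]; simpl in *.
  - rewrite Rabs_R0; lra.
  - eapply Rle_trans; [apply Rabs_triang|]. rewrite Rmult_plus_distr_r.
    apply Rplus_le_compat; [|apply IH; auto].
    destruct (in_nbhd r i j (fst c) (snd c)); [auto | rewrite Rabs_R0; lra].
Qed.

Lemma deriv_within_continuous a b g t l :
  a <= t <= b -> deriv_within a b g t l ->
  forall eps, 0 < eps -> exists d, 0 < d /\
    forall s, a <= s <= b -> Rabs (s - t) < d -> Rabs (g s - g t) < eps.
Proof.
  intros Ht Hd eps Heps. destruct (Hd 1 Rlt_0_1) as [d [Hd0 Hdd]].
  assert (Hl : 0 < Rabs l + 1) by (pose proof (Rabs_pos l); lra).
  exists (Rmin d (eps / (Rabs l + 1))).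
  split; [apply Rmin_pos; [exact Hd0 | now apply Rdiv_lt_0_compat]|].
  intros s Hs Hst. destruct (Req_dec s t) as [-> | Hne].
  { rewrite Rminus_diag, Rabs_R0. exact Heps. }
  assert (Hh : s - t <> 0) by lra.
  assert (Hq := Hdd (s - t) Hh (Rlt_le_trans _ _ _ Hst (Rmin_l _ _))).
  replace (t + (s - t)) with s in Hq by ring. specialize (Hq Hs).
  assert (Hquot : Rabs ((g s - g t) / (s - t)) < Rabs l + 1)
    by (pose proof (Rabs_triang_inv ((g s - g t) / (s - t)) l); lra).
  assert (Hst' : Rabs (s - t) < eps / (Rabs l + 1)) by exact (Rlt_le_trans _ _ _ Hst (Rmin_r _ _)).
  replace (g s - g t) with ((g s - g t) / (s - t) * (s - t)) by (field; exact Hh).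
  rewrite Rabs_mult.
  apply Rle_lt_trans with ((Rabs l + 1) * Rabs (s - t)).
  - apply Rmult_le_compat_r; [apply Rabs_pos | lra].
  - apply Rmult_lt_compat_l with (r := Rabs l + 1) in Hst'; [|exact Hl].
    replace ((Rabs l + 1) * (eps / (Rabs l + 1))) with eps in Hst' by (field; lra). exact Hst'.
Qed.

Lemma deriv_within_sub a b g1 g2 t l1 l2 :
  deriv_within a b g1 t l1 -> deriv_within a b g2 t l2 ->
  deriv_within a b (fun s => g1 s - g2 s) t (l1 - l2).
Proof.
  intros H1 H2 eps Heps.
  destruct (H1 (eps / 2)) as [d1 [Hd1 H1']]; [lra|].
  destruct (H2 (eps / 2)) as [d2 [Hd2 H2']]; [lra|].
  exists (Rmin d1 d2). split; [now apply Rmin_pos|]. intros h Hh Hhd Hab.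
  specialize (H1' h Hh (Rlt_le_trans _ _ _ Hhd (Rmin_l _ _)) Hab).
  specialize (H2' h Hh (Rlt_le_trans _ _ _ Hhd (Rmin_r _ _)) Hab).
  replace ((g1 (t + h) - g2 (t + h) - (g1 t - g2 t)) / h - (l1 - l2)) with
    (((g1 (t + h) - g1 t) / h - l1) - ((g2 (t + h) - g2 t) / h - l2)) by (field; exact Hh).
  unfold Rminus at 1. eapply Rle_lt_trans; [apply Rabs_triang|]. rewrite Rabs_Ropp. lra.
Qed.

Lemma deriv_within_opp a b g t l :
  deriv_within a b g t l -> deriv_within a b (fun s => - g s) t (- l).
Proof.
  intros Hg eps Heps. destruct (Hg eps Heps) as [d [Hd Hg']].
  exists d. split; [exact Hd|]. intros h Hh Hhd Hab.
  replace ((- g (t + h) - - g t) / h - - l) with (- ((g (t + h) - g t) / h - l)) by (field; exact Hh).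
  rewrite Rabs_Ropp. auto.
Qed.

(* Clamping to [u, v] extends a function known only on [u, v] to a continuous
   function on R, so that the global mean value theorem applies. *)
Definition clamp (u v t : R) : R := Rmax u (Rmin v t).

Lemma clamp_in u v t : u <= v -> u <= clamp u v t <= v.
Proof. intros. unfold clamp, Rmax, Rmin. repeat destruct Rle_dec; lra. Qed.

Lemma clamp_id u v t : u <= t <= v -> clamp u v t = t.
Proof. intros. unfold clamp, Rmax, Rmin. repeat destruct Rle_dec; lra. Qed.

Lemma clamp_contract u v s t : u <= v -> Rabs (clamp u v s - clamp u v t) <= Rabs (s - t).
Proof.
  intros. unfold clamp, Rmax, Rmin.
  repeat destruct Rle_dec; unfold Rabs; repeat destruct Rcase_abs; lra.
Qed.

Section Increment.

Variables (a b : R) (g D : R -> R).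
Hypothesis Hg : forall t, a <= t <= b -> deriv_within a b g t (D t).

Lemma clamp_comp_continuous u v x :
  a <= u -> u <= v -> v <= b -> continuity_pt (fun s => g (clamp u v s)) x.
Proof.
  intros Hau Huv Hvb eps Heps.
  pose proof (clamp_in u v x Huv) as Hx.
  assert (Hx' : a <= clamp u v x <= b) by lra.
  destruct (deriv_within_continuous a b g _ _ Hx' (Hg _ Hx') eps Heps) as [d [Hd Hcont]].
  exists d. split; [exact Hd|]. intros s [_ Hs]. simpl in *. unfold R_dist in *.
  apply Hcont.
  - pose proof (clamp_in u v s Huv); lra.
  - eapply Rle_lt_trans; [apply clamp_contract | exact Hs]; lra.
Qed.

Lemma clamp_comp_is_derive u v x :
  a <= u -> v <= b -> u < x < v -> is_derive (fun s => g (clamp u v s)) x (D x).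
Proof.
  intros Hau Hvb Hx. apply is_derive_Reals. intros eps Heps.
  destruct (Hg x ltac:(lra) eps Heps) as [d [Hd Hdiff]].
  assert (Hpos : 0 < Rmin d (Rmin (x - u) (v - x)))
    by (apply Rmin_pos; [exact Hd | apply Rmin_pos; lra]).
  exists (mkposreal _ Hpos). intros h Hh Hhd. simpl in Hhd.
  assert (Hh1 : Rabs h < d) by exact (Rlt_le_trans _ _ _ Hhd (Rmin_l _ _)).
  assert (Hh2 : Rabs h < Rmin (x - u) (v - x)) by exact (Rlt_le_trans _ _ _ Hhd (Rmin_r _ _)).
  pose proof (Rmin_l (x - u) (v - x)); pose proof (Rmin_r (x - u) (v - x)).
  apply Rabs_lt_between in Hh2 as Hh3.
  rewrite !clamp_id by lra. apply Hdiff; auto; lra.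
Qed.

Lemma deriv_within_increment_le M u v :
  (forall t, a <= t <= b -> D t <= M) ->
  a <= u -> u <= v -> v <= b -> g v - g u <= M * (v - u).
Proof.
  intros HM Hau Huv Hvb.
  destruct (Req_dec u v) as [<- | Hne]; [lra|].
  destruct (MVT_gen (fun s => g (clamp u v s)) u v D) as [c [Hc Hmvt]].
  - rewrite Rmin_left, Rmax_right by lra. intros x Hx. apply clamp_comp_is_derive; auto.
  - intros x _. apply clamp_comp_continuous; auto.
  - rewrite Rmin_left, Rmax_right in Hc by lra.
    rewrite !clamp_id in Hmvt by lra. rewrite Hmvt.
    apply Rmult_le_compat_r; [lra | apply HM; lra].
Qed.

End Increment.

Lemma deriv_within_drift a b g D d c u v :
  (forall t, a <= t <= b -> deriv_within a b g t (D t)) ->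
  (forall t, a <= t <= b -> Rabs (D t - d) <= c) ->
  a <= u -> u <= v -> v <= b -> Rabs (g v - g u - d * (v - u)) <= c * (v - u).
Proof.
  intros Hg Hc Hau Huv Hvb.
  assert (Hup := deriv_within_increment_le a b g D Hg (d + c) u v).
  assert (Hlow := deriv_within_increment_le a b (fun s => - g s) (fun t => - D t)
                    (fun t Ht => deriv_within_opp _ _ _ _ _ (Hg t Ht)) (c - d) u v).
  simpl in Hlow. apply Rabs_le.
  assert (Hb : forall t, a <= t <= b -> d - c <= D t <= d + c)
    by (intros t Ht; specialize (Hc t Ht); apply Rabs_le_between in Hc; lra).
  split.
  - assert (Hl := Hlow (fun t Ht => ltac:(specialize (Hb t Ht); lra)) Hau Huv Hvb). lra.
  - assert (Hu := Hup (fun t Ht => proj2 (Hb t Ht)) Hau Huv Hvb). lra.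
Qed.

Lemma deriv_within_lipschitz a b g D L s t :
  (forall t, a <= t <= b -> deriv_within a b g t (D t)) ->
  (forall t, a <= t <= b -> Rabs (D t) <= L) ->
  a <= s <= b -> a <= t <= b -> Rabs (g s - g t) <= L * Rabs (s - t).
Proof.
  intros Hg HL Hs Ht.
  assert (HL0 : forall t, a <= t <= b -> Rabs (D t - 0) <= L) by (intros; rewrite Rminus_0_r; auto).
  destruct (Rle_dec s t) as [Hst | Hts].
  - pose proof (deriv_within_drift a b g D 0 L s t Hg HL0 ltac:(lra) Hst ltac:(lra)) as Hdr.
    rewrite Rabs_minus_sym, (Rabs_left1 (s - t)) by lra.
    replace (g t - g s - 0 * (t - s)) with (g t - g s) in Hdr by ring. lra.
  - pose proof (deriv_within_drift a b g D 0 L t s Hg HL0 ltac:(lra) ltac:(lra) ltac:(lra)) as Hdr.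
    rewrite (Rabs_right (s - t)) by lra.
    replace (g s - g t - 0 * (s - t)) with (g s - g t) in Hdr by ring. exact Hdr.
Qed.

Lemma lipschitz_stays_away (g : R -> R) a b L e0 t :
  0 < e0 -> 0 <= L ->
  (forall s u, a <= s <= b -> a <= u <= b -> Rabs (g s - g u) <= L * Rabs (s - u)) ->
  a <= t <= b -> 2 * e0 < Rabs (g t) ->
  exists al be, a <= al /\ be <= b /\ Rmin (e0 / (L + 1)) (b - a) <= be - al /\
    forall s, al <= s <= be -> e0 < Rabs (g s).
Proof.
  intros He0 HL Hlip Ht Hgt. set (rho := e0 / (L + 1)).
  assert (Hrho : 0 < rho) by (apply Rdiv_lt_0_compat; lra).
  assert (HLrho : L * rho <= e0).
  { assert (He0rho : e0 = (L + 1) * rho) by (unfold rho; field; lra). nra. }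
  exists (Rmax a (t - rho)), (Rmin b (t + rho)).
  split; [apply Rmax_l|]. split; [apply Rmin_l|]. split.
  - unfold Rmax, Rmin. repeat destruct Rle_dec; lra.
  - intros s Hs.
    pose proof (Rmax_l a (t - rho)); pose proof (Rmax_r a (t - rho)).
    pose proof (Rmin_l b (t + rho)); pose proof (Rmin_r b (t + rho)).
    assert (Hst : Rabs (s - t) <= rho) by (apply Rabs_le; lra).
    pose proof (Hlip s t ltac:(lra) Ht) as Hgst.
    pose proof (Rabs_triang_inv (g t) (g s)) as Htri. rewrite Rabs_minus_sym in Htri.
    assert (L * Rabs (s - t) <= L * rho) by (apply Rmult_le_compat_l; assumption).
    lra.
Qed.

(* If no coordinate ever exceeds [2 e0], the drift [d] of coordinate (i,j)
   would move it by more than [4 e0] across [a, b]. *)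
Lemma separation_on_interval m n (y : R -> vec) (D : nat -> nat -> R -> R) a b L c d e0 i j :
  0 < e0 -> 0 <= L -> a <= b -> is_cell m n i j ->
  (forall h l, is_cell m n h l -> forall t, a <= t <= b ->
     deriv_within a b (fun s => y s h l) t (D h l t)) ->
  (forall h l, is_cell m n h l -> forall t, a <= t <= b -> Rabs (D h l t) <= L) ->
  (forall t, a <= t <= b -> vnorm m n (y t) <= 2 * e0 -> Rabs (D i j t - d) <= c) ->
  4 * e0 < (Rabs d - c) * (b - a) ->
  exists al be, a <= al /\ be <= b /\ Rmin (e0 / (L + 1)) (b - a) <= be - al /\
    forall t, al <= t <= be -> e0 < vnorm m n (y t).
Proof.
  intros He0 HL Hab Hij Hder HDL Hdrift Hgap.
  destruct (classic (exists t, a <= t <= b /\ 2 * e0 < vnorm m n (y t)))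
    as [[t [Ht Hbig]] | Hsmall].
  - destruct (vnorm_gt m n (y t) (2 * e0) ltac:(lra) Hbig) as [h [l [Hhl Hyt]]].
    destruct (lipschitz_stays_away (fun s => y s h l) a b L e0 t He0 HL
                (fun s u Hs Hu => deriv_within_lipschitz a b _ _ L s u (Hder h l Hhl) (HDL h l Hhl) Hs Hu)
                Ht Hyt) as [al [be [Hal [Hbe [Hlen Hsep]]]]].
    exists al, be. repeat split; auto. intros s Hs.
    eapply Rlt_le_trans; [exact (Hsep s Hs) | apply vnorm_ge, Hhl].
  - exfalso.
    assert (Hsm : forall t, a <= t <= b -> vnorm m n (y t) <= 2 * e0).
    { intros t Ht. apply Rnot_lt_le. intros Hlt. apply Hsmall. exists t. auto. }
    pose proof (deriv_within_drift a b _ _ d c a b (Hder i j Hij)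
                  (fun t Ht => Hdrift t Ht (Hsm t Ht)) ltac:(lra) Hab ltac:(lra)) as Hdr.
    assert (Hya : Rabs (y a i j) <= 2 * e0)
      by (eapply Rle_trans; [apply vnorm_ge, Hij | apply Hsm; lra]).
    assert (Hyb : Rabs (y b i j) <= 2 * e0)
      by (eapply Rle_trans; [apply vnorm_ge, Hij | apply Hsm; lra]).
    assert (Hdab : Rabs (d * (b - a)) <= Rabs (y b i j - y a i j) + c * (b - a)).
    { pose proof (Rabs_triang_inv (d * (b - a)) (y b i j - y a i j)) as Htri.
      rewrite (Rabs_minus_sym (d * (b - a))) in Htri. lra. }
    rewrite Rabs_mult, (Rabs_right (b - a)) in Hdab by lra.
    assert (Hyba : Rabs (y b i j - y a i j) <= 4 * e0).
    { unfold Rminus. eapply Rle_trans; [apply Rabs_triang|]. rewrite Rabs_Ropp. lra. }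
    nra.
Qed.

Section Network.

Variables (m n r : nat) (a : nat -> nat -> R) (C : nat -> nat -> nat -> nat -> R)
  (f : R -> R) (Mf Lf : R).
Hypothesis Hf_bound : forall s, Rabs (f s) <= Mf.
Hypothesis Hf_lip : forall s1 s2, Rabs (f s1 - f s2) <= Lf * Rabs (s1 - s2).

Definition rhs (y z : vec) (i j : nat) : R :=
  - a i j * y i j - nb_sum m n r i j (fun h l => C i j h l * f (y h l) * y i j) + z i j.

(* Lipschitz constant of [rhs] in [y] on the ball of radius [H]. *)
Definition rhs_lip (H : R) : R :=
  max_cells m n (fun i j => Rabs (a i j)) +
  max_cells m n (fun i j => nb_sum m n r i j (fun h l => Rabs (C i j h l))) * (Mf + Lf * H).

Lemma f_bound_nonneg : 0 <= Mf.
Proof. eapply Rle_trans; [apply Rabs_pos | apply (Hf_bound 0)]. Qed.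

Lemma f_lip_nonneg : 0 <= Lf.
Proof.
  pose proof (Hf_lip 1 0) as Hl. rewrite Rminus_0_r, Rabs_R1, Rmult_1_r in Hl.
  pose proof (Rabs_pos (f 1 - f 0)). lra.
Qed.

Lemma rhs_lip_nonneg H : 0 <= H -> 0 <= rhs_lip H.
Proof.
  intros HH. unfold rhs_lip. pose proof f_bound_nonneg. pose proof f_lip_nonneg.
  pose proof (max_cells_nonneg m n (fun i j => Rabs (a i j))).
  pose proof (max_cells_nonneg m n (fun i j => nb_sum m n r i j (fun h l => Rabs (C i j h l)))).
  assert (0 <= Mf + Lf * H) by nra.
  nra.
Qed.

Lemma rhs_sub_bound (y y' z z' : vec) H delta i j :
  is_cell m n i j -> vnorm m n (vsub y y') <= delta -> Rabs (y' i j) <= H ->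
  Rabs (rhs y z i j - rhs y' z' i j - (z i j - z' i j)) <= rhs_lip H * delta.
Proof.
  intros Hij Hdelta HH.
  assert (Hyy : forall h l, is_cell m n h l -> Rabs (y h l - y' h l) <= delta)
    by (intros h l Hhl; eapply Rle_trans; [apply (vnorm_ge m n (vsub y y')), Hhl | exact Hdelta]).
  assert (Hdelta0 : 0 <= delta) by (eapply Rle_trans; [apply vnorm_nonneg | exact Hdelta]).
  pose proof f_bound_nonneg. pose proof f_lip_nonneg.
  replace (rhs y z i j - rhs y' z' i j - (z i j - z' i j)) with
    (- a i j * (y i j - y' i j) -
     nb_sum m n r i j (fun h l => C i j h l * f (y h l) * y i j - C i j h l * f (y' h l) * y' i j))
    by (rewrite <- nb_sum_sub; unfold rhs; ring).
  assert (Hsum : Rabs (nb_sum m n r i j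
      (fun h l => C i j h l * f (y h l) * y i j - C i j h l * f (y' h l) * y' i j))
      <= nb_sum m n r i j (fun h l => Rabs (C i j h l)) * ((Mf + Lf * H) * delta)).
  { apply nb_sum_abs_le. intros h l Hhl.
    replace (C i j h l * f (y h l) * y i j - C i j h l * f (y' h l) * y' i j) with
      (C i j h l * (f (y h l) * (y i j - y' i j) + (f (y h l) - f (y' h l)) * y' i j)) by ring.
    rewrite Rabs_mult. apply Rmult_le_compat_l; [apply Rabs_pos|].
    eapply Rle_trans; [apply Rabs_triang|]. rewrite !Rabs_mult.
    assert (Hlip := Rle_trans _ _ _ (Hf_lip (y h l) (y' h l))
                      (Rmult_le_compat_l Lf _ _ ltac:(nra) (Hyy h l Hhl))).
    pose proof (Hyy i j Hij). pose proof (Hf_bound (y h l)).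
    pose proof (Rabs_pos (f (y h l))). pose proof (Rabs_pos (y i j - y' i j)).
    pose proof (Rabs_pos (f (y h l) - f (y' h l))). pose proof (Rabs_pos (y' i j)).
    nra. }
  assert (Hw : 0 <= (Mf + Lf * H) * delta).
  { pose proof (Rabs_pos (y' i j)). apply Rmult_le_pos; [nra | exact Hdelta0]. }
  assert (HC := Rmult_le_compat_r _ _ _ Hw
      (max_cells_ge m n (fun i j => nb_sum m n r i j (fun h l => Rabs (C i j h l))) i j Hij)).
  assert (Ha := Rmult_le_compat _ _ _ _ (Rabs_pos (a i j)) (Rabs_pos _)
      (max_cells_ge m n (fun i j => Rabs (a i j)) i j Hij) (Hyy i j Hij)).
  unfold Rminus at 1. eapply Rle_trans; [apply Rabs_triang|]. rewrite Rabs_Ropp, Rabs_mult, Rabs_Ropp.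
  unfold rhs_lip. simpl in HC, Ha. lra.
Qed.

Variables (theta : Z -> R) (zeta zeta' : Z -> vec) (x x' : R -> vec) (H MF : R).
Hypotheses (Hx : solves_N m n r a C f theta zeta x) (Hx' : solves_N m n r a C f theta zeta' x').
Hypotheses (Hx_bound : forall t, inT0 theta t -> vnorm m n (x t) <= H)
           (Hx'_bound : forall t, inT0 theta t -> vnorm m n (x' t) <= H).
Hypotheses (Hzeta_bound : forall k, vnorm m n (zeta k) <= MF)
           (Hzeta'_bound : forall k, vnorm m n (zeta' k) <= MF).
Hypotheses (HH : 0 <= H) (HMF : 0 <= MF).

Definition speed_bound : R := 2 * (rhs_lip H * H + MF).

Lemma speed_bound_nonneg : 0 <= speed_bound.
Proof. unfold speed_bound. pose proof (rhs_lip_nonneg H HH). nra. Qed.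

Lemma solutions_diff_deriv k i j t :
  is_cell m n i j -> theta (2 * k - 1)%Z <= t <= theta (2 * k)%Z ->
  deriv_within (theta (2 * k - 1)%Z) (theta (2 * k)%Z) (fun s => x s i j - x' s i j) t
    (rhs (x t) (zeta k) i j - rhs (x' t) (zeta' k) i j).
Proof.
  intros Hij Ht. apply deriv_within_sub; [apply (Hx k i j Hij) | apply (Hx' k i j Hij)]; exact Ht.
Qed.

Lemma solutions_diff_speed k i j t :
  is_cell m n i j -> theta (2 * k - 1)%Z <= t <= theta (2 * k)%Z ->
  Rabs (rhs (x t) (zeta k) i j - rhs (x' t) (zeta' k) i j) <= speed_bound.
Proof.
  intros Hij Ht.
  assert (HT0 : inT0 theta t) by (exists k; exact Ht).
  assert (Hdiff : vnorm m n (vsub (x t) (x' t)) <= 2 * H)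
    by (pose proof (vnorm_sub_le m n (x t) (x' t)); pose proof (Hx_bound t HT0);
        pose proof (Hx'_bound t HT0); lra).
  assert (Hx'ij : Rabs (x' t i j) <= H)
    by (eapply Rle_trans; [apply vnorm_ge, Hij | apply Hx'_bound, HT0]).
  pose proof (rhs_sub_bound (x t) (x' t) (zeta k) (zeta' k) H (2 * H) i j Hij Hdiff Hx'ij) as Hsub.
  assert (Hz : Rabs (zeta k i j - zeta' k i j) <= 2 * MF).
  { pose proof (vnorm_ge m n (vsub (zeta k) (zeta' k)) i j Hij).
    pose proof (vnorm_sub_le m n (zeta k) (zeta' k)).
    pose proof (Hzeta_bound k); pose proof (Hzeta'_bound k). unfold vsub in *. lra. }
  pose proof (Rabs_triang_inv (rhs (x t) (zeta k) i j - rhs (x' t) (zeta' k) i j)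
                              (zeta k i j - zeta' k i j)).
  unfold speed_bound. lra.
Qed.

Lemma solutions_separate_on_window k e em eps0 :
  0 < em -> em <= eta theta k -> 0 < eps0 ->
  4 * eps0 < (e - 2 * rhs_lip H * eps0) * em ->
  e < vnorm m n (vsub (zeta k) (zeta' k)) ->
  exists al be, theta (2 * k - 1)%Z <= al /\ be <= theta (2 * k)%Z /\
    Rmin (eps0 / (speed_bound + 1)) em <= be - al /\
    forall t, al <= t <= be -> eps0 < vnorm m n (vsub (x t) (x' t)).
Proof.
  intros Hem Heta Heps0 Hsmall He. unfold eta in Heta.
  assert (HB := rhs_lip_nonneg H HH).
  assert (Hgap : 0 < e - 2 * rhs_lip H * eps0) by (apply Rnot_le_lt; intro; nra).
  destruct (vnorm_gt m n _ e ltac:(nra) He) as [i [j [Hij Hd]]].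
  destruct (separation_on_interval m n (fun t => vsub (x t) (x' t))
              (fun h l t => rhs (x t) (zeta k) h l - rhs (x' t) (zeta' k) h l)
              (theta (2 * k - 1)%Z) (theta (2 * k)%Z) speed_bound (rhs_lip H * (2 * eps0))
              (zeta k i j - zeta' k i j) eps0 i j)
    as [al [be [Hal [Hbe [Hlen Hsep]]]]].
  - exact Heps0.
  - exact speed_bound_nonneg.
  - lra.
  - exact Hij.
  - intros h l Hhl t Ht. now apply solutions_diff_deriv.
  - intros h l Hhl t Ht. now apply solutions_diff_speed.
  - intros t Ht Hsm. apply rhs_sub_bound; [exact Hij | exact Hsm |].
    eapply Rle_trans; [apply vnorm_ge, Hij | apply Hx'_bound; exists k; exact Ht].
  - unfold vsub in Hd. nra.
  - exists al, be. repeat split; auto.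
    eapply Rle_trans; [apply Rle_min_compat_l | exact Hlen]. lra.
Qed.

End Network.

Lemma pos_lower_bound_below (g : nat -> R) N :
  (forall i, 0 < g i) -> exists em, 0 < em /\ forall i, (i < N)%nat -> em <= g i.
Proof.
  intros Hg. induction N as [|N [em [Hem Hle]]].
  - exists 1. split; [lra | intros i Hi; lia].
  - exists (Rmin em (g N)). split; [now apply Rmin_pos|].
    intros i Hi. destruct (Nat.eq_dec i N) as [-> | Hne]; [apply Rmin_r|].
    eapply Rle_trans; [apply Rmin_l | apply Hle; lia].
Qed.

Section TimeScale.

Variables (theta : Z -> R) (omega : R) (p : nat).
Hypothesis Hts : time_scale theta omega p.

Lemma time_scale_period_pos : (1 <= p)%nat.
Proof.
  destruct Hts as [_ [_ [Homega Hper]]]. destruct p; [|lia].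
  specialize (Hper 0%Z). simpl in Hper. lra.
Qed.

Lemma eta_pos k : 0 < eta theta k.
Proof.
  unfold eta. destruct Hts as [Hincr _].
  pose proof (Hincr (2 * k - 1)%Z (2 * k)%Z ltac:(lia)). lra.
Qed.

Lemma eta_periodic k q : eta theta (k + Z.of_nat p * q) = eta theta k.
Proof.
  destruct Hts as [_ [_ [_ Hper]]].
  assert (Hstep : forall k', eta theta (k' + Z.of_nat p) = eta theta k').
  { intros k'. unfold eta.
    replace (2 * (k' + Z.of_nat p))%Z with (2 * k' + 2 * Z.of_nat p)%Z by ring.
    replace (2 * k' + 2 * Z.of_nat p - 1)%Z with (2 * k' - 1 + 2 * Z.of_nat p)%Z by ring.
    rewrite !Hper. ring. }
  induction q using Z.peano_ind.
  - now rewrite Z.mul_0_r, Z.add_0_r.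
  - rewrite <- IHq, <- (Hstep (k + Z.of_nat p * q)%Z). f_equal. lia.
  - rewrite <- IHq, <- (Hstep (k + Z.of_nat p * Z.pred q)%Z). f_equal. lia.
Qed.

Lemma eta_lower_bound : exists em, 0 < em /\ forall k, em <= eta theta k.
Proof.
  destruct (pos_lower_bound_below (fun i => eta theta (Z.of_nat i)) p (fun i => eta_pos _))
    as [em [Hem Hle]].
  exists em. split; [exact Hem|]. intros k.
  pose proof time_scale_period_pos as Hp.
  assert (HP : (0 < Z.of_nat p)%Z) by lia.
  pose proof (Z.mod_pos_bound k (Z.of_nat p) HP) as Hmod.
  replace k with (Z.of_nat (Z.to_nat (k mod Z.of_nat p)) + Z.of_nat p * (k / Z.of_nat p))%Z.
  - rewrite eta_periodic. apply Hle. lia.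
  - rewrite Z2Nat.id by lia. symmetry. rewrite Z.add_comm. apply Z.div_mod. lia.
Qed.

End TimeScale.

Lemma windows_disjoint (theta : Z -> R) k1 k2 t :
  (forall k1 k2, (k1 < k2)%Z -> theta k1 < theta k2) -> k1 <> k2 ->
  theta (2 * k1 - 1)%Z <= t <= theta (2 * k1)%Z ->
  theta (2 * k2 - 1)%Z <= t <= theta (2 * k2)%Z -> False.
Proof.
  intros Hincr Hne H1 H2. destruct (Z.lt_gt_cases k1 k2) as [[Hlt | Hgt] _]; [exact Hne | |].
  - pose proof (Hincr (2 * k1)%Z (2 * k2 - 1)%Z ltac:(lia)). lra.
  - pose proof (Hincr (2 * k2)%Z (2 * k1 - 1)%Z ltac:(lia)). lra.
Qed.

Lemma strictly_increasing_injective (kappa : nat -> Z) q1 q2 :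
  (forall q, (kappa q < kappa (S q))%Z) -> q1 <> q2 -> kappa q1 <> kappa q2.
Proof.
  intros Hincr Hne.
  assert (Hlt : forall q q', (q < q')%nat -> (kappa q < kappa q')%Z).
  { intros q q' Hq. induction Hq; [apply Hincr | specialize (Hincr m); lia]. }
  destruct (Nat.lt_gt_cases q1 q2) as [[H | H] _]; [exact Hne | |];
    specialize (Hlt _ _ H); lia.
Qed.

Lemma frequent_choice {A : Type} (P : Z -> A -> Prop) :
  (forall N, exists k, (N <= k)%Z /\ exists y, P k y) ->
  exists (kappa : nat -> Z) (J : nat -> A),
    (forall q, (kappa q < kappa (S q))%Z) /\ forall q, P (kappa q) (J q).
Proof.
  intros Hfreq.
  assert (pick : forall N, {ky : Z * A | (N <= fst ky)%Z /\ P (fst ky) (snd ky)}).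
  { intros N. apply constructive_indefinite_description.
    destruct (Hfreq N) as [k [Hk [y Hy]]]. now exists (k, y). }
  set (start := nat_rect (fun _ => Z) 0%Z (fun _ N => fst (proj1_sig (pick N)) + 1)%Z).
  exists (fun q => fst (proj1_sig (pick (start q)))), (fun q => snd (proj1_sig (pick (start q)))).
  split; intros q; cbv beta.
  - destruct (proj2_sig (pick (start (S q)))) as [Hge _].
    assert (Hstart : start (S q) = (fst (proj1_sig (pick (start q))) + 1)%Z) by reflexivity.
    lia.
  - exact (proj2 (proj2_sig (pick (start q)))).
Qed.

Lemma disjoint_windows_of_frequent (theta : Z -> R) (Q : R * R -> Prop) :
  (forall k1 k2, (k1 < k2)%Z -> theta k1 < theta k2) ->
  (forall N, exists k, (N <= k)%Z /\
     exists I, theta (2 * k - 1)%Z <= fst I /\ snd I <= theta (2 * k)%Z /\ Q I) ->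
  exists J : nat -> R * R, (forall q, Q (J q)) /\
    (forall q t, fst (J q) <= t <= snd (J q) -> inT0 theta t) /\
    (forall q1 q2 t, q1 <> q2 -> fst (J q1) <= t <= snd (J q1) ->
                     ~ (fst (J q2) <= t <= snd (J q2))).
Proof.
  intros Hincr Hfreq.
  destruct (frequent_choice (fun k (I : R * R) =>
      theta (2 * k - 1)%Z <= fst I /\ snd I <= theta (2 * k)%Z /\ Q I) Hfreq)
    as [kappa [J [Hkappa HJ]]].
  exists J. split; [|split].
  - intros q. apply (HJ q).
  - intros q t Ht. exists (kappa q). destruct (HJ q) as [H1 [H2 _]]. lra.
  - intros q1 q2 t Hne Ht1 Ht2.
    destruct (HJ q1) as [A1 [B1 _]], (HJ q2) as [A2 [B2 _]].
    apply (windows_disjoint theta (kappa q1) (kappa q2) t Hincr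
             (strictly_increasing_injective kappa q1 q2 Hkappa Hne)); lra.
Qed.

Lemma orbit_bounded (Lam : vec -> Prop) (F : vec -> vec) (zeta : Z -> vec) m n MF :
  in_Theta Lam F zeta -> (forall v, Lam v -> vnorm m n (F v) <= MF) ->
  forall k, vnorm m n (zeta k) <= MF.
Proof.
  intros Hz HF k. destruct (Hz (k - 1)%Z) as [HL Hnext].
  replace (k - 1 + 1)%Z with k in Hnext by ring. rewrite Hnext. exact (HF _ HL).
Qed.

Lemma small_eps_exists e em B :
  0 < e -> 0 < em -> exists eps0, 0 < eps0 /\ 4 * eps0 < (e - 2 * B * eps0) * em.
Proof.
  intros He Hem. set (D := 8 * (Rabs B * em + 1)).
  assert (HD : 0 < D) by (unfold D; pose proof (Rabs_pos B); nra).
  exists (e * em / D).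
  assert (Heps : e * em = D * (e * em / D)) by (field; lra).
  assert (Hpos : 0 < e * em / D) by (apply Rdiv_lt_0_compat; nra).
  split; [exact Hpos|]. set (eps := e * em / D) in *.
  assert (HBabs : B * (eps * em) <= Rabs B * (eps * em))
    by (apply Rmult_le_compat_r; [nra | apply Rle_abs]).
  assert (HX : 0 <= Rabs B * em * eps) by (pose proof (Rabs_pos B); apply Rmult_le_pos; nra).
  unfold D in Heps. nra.
Qed.

Theorem lemma4
  (m n r : nat) (a : nat -> nat -> R) (C : nat -> nat -> nat -> nat -> R) (f : R -> R)
  (theta : Z -> R) (omega : R) (p : nat)
  (Lam : vec -> Prop) (F : vec -> vec) (MF Mf Lf : R) (K : nat -> nat -> R)
  (zeta zeta' : Z -> vec) (x x' : R -> vec)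
  (Hm : (1 <= m)%nat) (Hn : (1 <= n)%nat)
  (Ha : forall i j, is_cell m n i j -> 0 < a i j)
  (HC : forall i j h l, is_cell m n i j -> is_cell m n h l -> 0 <= C i j h l)
  (Hfc : forall s, continuity_pt f s)
  (Hts : time_scale theta omega p)
  (HLsupp : forall v, Lam v -> supported m n v)
  (HLcomp : compact_set m n Lam)
  (HFL : forall v, Lam v -> Lam (F v))
  (HFc : continuous_on_set m n Lam F)
  (HMF : (exists v, Lam v /\ vnorm m n (F v) = MF) /\
         (forall v, Lam v -> vnorm m n (F v) <= MF))
  (Hz : in_Theta Lam F zeta) (Hz' : in_Theta Lam F zeta')
  (* (C1) *)
  (HC1 : forall i j k, is_cell m n i j -> dlt theta k * a i j <> 1)
  (* (C2): lambda = min_{(i,j)} lambda_ij > 0 *)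
  (HC2 : forall i j, is_cell m n i j -> 0 < lam_of theta p (a i j))
  (HK : forall i j, is_cell m n i j ->
          0 < K i j /\ u_bound theta (a i j) (K i j) (lam_of theta p (a i j)))
  (* (C3) *)
  (HC3 : 0 < Mf /\ forall s, Rabs (f s) <= Mf)
  (* (C4) *)
  (HC4 : 0 < Lf /\ forall s1 s2, Rabs (f s1 - f s2) <= Lf * Rabs (s1 - s2))
  (* (C5) *)
  (HC5 : (Mf + H0 m n r theta p a K C Mf MF * Lf) * cbar m n r theta p a K C < 1)
  (* x = phi_zeta, x' = phi_zeta~ : the solutions of (N_zeta) on T_0 bounded by H0 *)
  (Hx : solves_N m n r a C f theta zeta x)
  (Hxb : forall t, inT0 theta t -> vnorm m n (x t) <= H0 m n r theta p a K C Mf MF)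
  (Hx' : solves_N m n r a C f theta zeta' x')
  (Hxb' : forall t, inT0 theta t -> vnorm m n (x' t) <= H0 m n r theta p a K C Mf MF)
  (* limsup_{k -> oo} ||zeta_k - zeta~_k|| > 0 *)
  (Hls : exists e, 0 < e /\ forall N : Z, exists k : Z, (N <= k)%Z /\
            e < vnorm m n (vsub (zeta k) (zeta' k))) :
  exists eps0 eps1 : R, 0 < eps0 /\ 0 < eps1 /\
  exists J : nat -> R * R,
    (forall q, eps1 <= snd (J q) - fst (J q)) /\
    (forall q t, fst (J q) <= t <= snd (J q) -> inT0 theta t) /\
    (forall q1 q2 t, q1 <> q2 -> fst (J q1) <= t <= snd (J q1) ->
                     ~ (fst (J q2) <= t <= snd (J q2))) /\
    (forall q t, fst (J q) <= t <= snd (J q) -> eps0 < vnorm m n (vsub (x t) (x' t))).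
Proof.
  destruct HC3 as [_ Hf_bound], HC4 as [_ Hf_lip].
  set (H := H0 m n r theta p a K C Mf MF) in *.
  assert (HH : 0 <= H).
  { apply Rle_trans with (vnorm m n (x (theta 0%Z))); [apply vnorm_nonneg|].
    apply Hxb. exists 0%Z. pose proof (proj1 (proj2 Hts)). simpl. lra. }
  assert (HMF0 : 0 <= MF) by (destruct HMF as [[v [_ <-]] _]; apply vnorm_nonneg).
  pose proof (orbit_bounded Lam F zeta m n MF Hz (proj2 HMF)) as Hzb.
  pose proof (orbit_bounded Lam F zeta' m n MF Hz' (proj2 HMF)) as Hzb'.
  set (L := speed_bound m n r a C Mf Lf H MF).
  assert (HL : 0 <= L) by (now apply speed_bound_nonneg with (f := f)).
  destruct Hls as [e [He Hfreq]].
  destruct (eta_lower_bound theta omega p Hts) as [em [Hem Heta]].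
  destruct (small_eps_exists e em (rhs_lip m n r a C Mf Lf H) He Hem) as [eps0 [Heps0 Hsmall]].
  set (eps1 := Rmin (eps0 / (L + 1)) em).
  assert (Heps1 : 0 < eps1) by (apply Rmin_pos; [apply Rdiv_lt_0_compat |]; lra).
  destruct (disjoint_windows_of_frequent theta (fun I : R * R => eps1 <= snd I - fst I /\
      forall t, fst I <= t <= snd I -> eps0 < vnorm m n (vsub (x t) (x' t))) (proj1 Hts))
    as [J [HJ [HT0 Hdisj]]].
  { intros N. destruct (Hfreq N) as [k [Hk Hsep]]. exists k. split; [exact Hk|].
    destruct (solutions_separate_on_window m n r a C f Mf Lf Hf_bound Hf_lip theta zeta zeta' x x'
                H MF Hx Hx' Hxb Hxb' Hzb Hzb' HH HMF0 k e em eps0 Hem (Heta k) Heps0 Hsmall Hsep)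
      as [al [be Hwin]].
    now exists (al, be). }
  exists eps0, eps1. split; [exact Heps0|]. split; [exact Heps1|].
  exists J. repeat split; auto; apply HJ.
Qed.
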